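(* Let $A$ be an $\mathbb N$-graded $k$-algebra generated by $A_1$ over $A_0$, and let $M$ be a point module over $A$. Then $\mathrm{End}_{\mathrm{QGr}\,A}(\pi^*M)\cong k$.
   Context: $k$ is a field. A point module is a graded right $A$-module $M=\bigoplus_{i\ge0}M_i$ with $M=M_0A$ and $\dim_kM_i=1$ for all $i\ge0$. $\mathrm{QGr}\,A$ is the quotient of the category of $\mathbb Z$-graded right $A$-modules by the torsion modules (modules each of whose elements $m$ satisfies $mA_{\ge n}=0$ for some $n$), with quotient functor $\pi^*$. *)

From HB Require Import structures.
From mathcomp Require Import all_boot all_order all_algebra.
Set Implicit Arguments. Unset Strict Implicit. Unset Printing Implicit Defensive.
Import GRing.Theory Num.Theory.
Local Open Scope ring_scope.

Section GradedAlgebra.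
Variable k : fieldType.
Variable A : algType k.
Variable G : nat -> {pred A}.

Definition is_Ngraded_algebra : Prop :=
  [/\ (forall i, [/\ 0 \in G i,
                   (forall a b, a \in G i -> b \in G i -> a + b \in G i)
                 & (forall (c : k) a, a \in G i -> c *: a \in G i)]),
      1 \in G 0%N,
      (forall i j a b, a \in G i -> b \in G j -> a * b \in G (i + j)%N),
      (forall a, exists s : seq nat, exists f : nat -> A,
          [/\ uniq s, (forall i, f i \in G i) & a = \sum_(i <- s) f i])
    & (forall (s : seq nat) (f : nat -> A), uniq s -> (forall i, f i \in G i) ->
          \sum_(i <- s) f i = 0 -> forall i, i \in s -> f i = 0)].

Definition generated_in_degree_one : Prop :=
  forall S : {pred A}, subring_closed S -> {subset G 0%N <= S} ->
    {subset G 1%N <= S} -> forall a, a \in S.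

Definition in_Age (n : nat) (a : A) : Prop :=
  exists s : seq nat, exists f : nat -> A,
    [/\ all (fun i => n <= i)%N s, (forall i, f i \in G i) & a = \sum_(i <- s) f i].

Section GradedModule.
Variable M : zmodType.
Variable act : M -> A -> M.
Variable MG : int -> {pred M}.

Definition is_right_module : Prop :=
  [/\ forall m, act m 1 = m,
      forall m a b, act (act m a) b = act m (a * b),
      forall m a b, act m (a + b) = act m a + act m b
    & forall m1 m2 a, act (m1 + m2) a = act m1 a + act m2 a].

Definition is_Zgraded_module : Prop :=
  [/\ (forall i, 0 \in MG i /\
          forall m1 m2, m1 \in MG i -> m2 \in MG i -> m1 - m2 \in MG i),
      (forall i j m a, m \in MG i -> a \in G j -> act m a \in MG (i + j%:Z)),
      (forall m, exists s : seq int, exists f : int -> M,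
          [/\ uniq s, (forall i, f i \in MG i) & m = \sum_(i <- s) f i])
    & (forall (s : seq int) (f : int -> M), uniq s -> (forall i, f i \in MG i) ->
          \sum_(i <- s) f i = 0 -> forall i, i \in s -> f i = 0)].

(* the k-vector space structure on M comes from k -> A, c |-> c%:A *)
Definition kdim_one (P : {pred M}) : Prop :=
  exists2 e, e \in P & e != 0 /\ forall m, m \in P -> exists c : k, m = act e c%:A.

Definition is_point_module : Prop :=
  [/\ is_right_module, is_Zgraded_module,
      (forall i : int, i < 0 -> forall m, m \in MG i -> m = 0),
      (forall i : int, 0 <= i -> kdim_one (MG i))
    & (forall m, exists s : seq (M * A),
          all (fun p => p.1 \in MG 0) s /\ m = \sum_(p <- s) act p.1 p.2)].

Definition torsion_elt (m : M) : Prop :=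
  exists n, forall a, in_Age n a -> act m a = 0.

Definition graded_submodule (P : {pred M}) : Prop :=
  [/\ 0 \in P,
      (forall m1 m2, m1 \in P -> m2 \in P -> m1 - m2 \in P),
      (forall m a, m \in P -> act m a \in P)
    & (forall m, m \in P -> exists s : seq int, exists f : int -> M,
          [/\ uniq s, (forall i, f i \in MG i /\ f i \in P) & m = \sum_(i <- s) f i])].

Definition cotorsion (P : {pred M}) : Prop :=
  forall m, exists n, forall a, in_Age n a -> act m a \in P.

(* A representative of a morphism pi^* M -> pi^* M in QGr A:
   a degree-0 graded A-module map  P -> M / tau M  with P <= M graded and M/P
   torsion, given by a function f : M -> M (values taken modulo tau M). *)
Definition qgr_rep (P : {pred M}) (f : M -> M) : Prop :=
  [/\ graded_submodule P, cotorsion P,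
      (forall m1 m2, m1 \in P -> m2 \in P -> torsion_elt (f (m1 + m2) - f m1 - f m2)),
      (forall m a, m \in P -> torsion_elt (f (act m a) - act (f m) a))
    & (forall i m, m \in P -> m \in MG i ->
          exists2 n, n \in MG i & torsion_elt (f m - n))].

(* two representatives define the same morphism of QGr A (direct limit) *)
Definition qgr_equiv (P1 : {pred M}) (f1 : M -> M) (P2 : {pred M}) (f2 : M -> M)
  : Prop :=
  exists P3 : {pred M},
    [/\ graded_submodule P3, cotorsion P3, {subset P3 <= P1}, {subset P3 <= P2}
      & forall m, m \in P3 -> torsion_elt (f1 m - f2 m)].

Definition allM : {pred M} := fun _ => true.

Definition scal_endo (c : k) : M -> M := fun m => act m c%:A.

(* End_{QGr A}(pi^* M) = k : the structure map k -> End, c |-> c * id,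
   is bijective *)
Definition End_QGr_iso_k : Prop :=
  (forall P f, qgr_rep P f -> exists c : k, qgr_equiv P f allM (scal_endo c)) /\
  (forall c d : k, qgr_equiv allM (scal_endo c) allM (scal_endo d) -> c = d).

End GradedModule.
End GradedAlgebra.

(* In a point module every nonzero homogeneous element m of degree i has
   m A_1 <> 0: otherwise the elements of degree <= i would form a submodule
   (A is generated by A_0 and A_1), which contains M_0 and hence all of M,
   contradicting M_{i+1} <> 0.  Iterating, m A_n <> 0 for every n, so M is
   torsion free.  A morphism of QGr A is therefore an honest degree-0 module
   map f : P -> M on a graded submodule with torsion quotient; on each
   one-dimensional M_i it is a scalar, and comparing two homogeneous elements
   after moving them into a common degree of P shows all these scalars
   coincide. *)
From HB Require Import structures.
From mathcomp Require Import all_boot all_order all_algebra boolp.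
Import Order.TTheory GRing.Theory Num.Theory.
Local Open Scope ring_scope.
Set Implicit Arguments. Unset Strict Implicit.

Section PointModule.
Variables (k : fieldType) (A : algType k) (G : nat -> {pred A}).
Hypothesis HA : is_Ngraded_algebra G.
Hypothesis Hgen : generated_in_degree_one G.
Variables (M : zmodType) (act : M -> A -> M) (MG : int -> {pred M}).
Hypothesis HM : is_point_module G act MG.

Lemma G_0 i : 0 \in G i. Proof. by case: HA => H _ _ _ _; case: (H i). Qed.
Lemma G_1 : 1 \in G 0. Proof. by case: HA. Qed.
Lemma G_M i j a b : a \in G i -> b \in G j -> a * b \in G (i + j).
Proof. by case: HA => _ _ H _ _; apply: H. Qed.

Lemma in_Age_homog n a : a \in G n -> in_Age G n a.
Proof.
move=> ha; exists [:: n], (fun j => if j == n then a else 0); split.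
- by rewrite /= leqnn.
- by move=> j; case: eqP => [->|_] //; apply: G_0.
- by rewrite big_seq1 eqxx.
Qed.

Lemma act1 m : act m 1 = m. Proof. by case: HM => [[H _ _ _]]. Qed.
Lemma actA m a b : act (act m a) b = act m (a * b). Proof. by case: HM => [[_ H _ _]]. Qed.
Lemma actDr m a b : act m (a + b) = act m a + act m b. Proof. by case: HM => [[_ _ H _]]. Qed.
Lemma actDl m1 m2 a : act (m1 + m2) a = act m1 a + act m2 a.
Proof. by case: HM => [[_ _ _ H]]. Qed.

Lemma act0l a : act 0 a = 0.
Proof. by apply: (addrI (act 0 a)); rewrite -actDl !addr0. Qed.
Lemma act0r m : act m 0 = 0.
Proof. by apply: (addrI (act m 0)); rewrite -actDr !addr0. Qed.
Lemma actNr m a : act m (- a) = - act m a.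
Proof. by apply/eqP; rewrite -addr_eq0 -actDr addNr act0r. Qed.
Lemma actBr m a b : act m (a - b) = act m a - act m b.
Proof. by rewrite actDr actNr. Qed.
Lemma act_sum (I : Type) (s : seq I) (F : I -> M) a :
  act (\sum_(i <- s) F i) a = \sum_(i <- s) act (F i) a.
Proof. exact: (big_morph (act^~ a) (fun x y => actDl x y a) (act0l a)). Qed.

Lemma act_scalarM m c d : act (act m c%:A) d%:A = act m (c * d)%:A.
Proof. by rewrite actA mulr_algl scalerA mulrC. Qed.
Lemma act_scalarC m c a : act (act m c%:A) a = act (act m a) c%:A.
Proof. by rewrite !actA mulr_algl mulr_algr. Qed.
Lemma act_scalar_eq0 m d : d != 0 -> act m d%:A = 0 -> m = 0.
Proof.
by move=> d0 h; rewrite -[m]act1 -[1 : A]scale1r -(mulfV d0) -act_scalarM h act0l.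
Qed.

Lemma MG_0 i : 0 \in MG i. Proof. by case: HM => _ [H _ _ _] _ _ _; case: (H i). Qed.
Lemma MG_B i m1 m2 : m1 \in MG i -> m2 \in MG i -> m1 - m2 \in MG i.
Proof. by case: HM => _ [H _ _ _] _ _ _; case: (H i) => _; apply. Qed.
Lemma MG_N i m : m \in MG i -> - m \in MG i.
Proof. by move=> h; rewrite -sub0r; apply: MG_B => //; apply: MG_0. Qed.
Lemma MG_act i j m a : m \in MG i -> a \in G j -> act m a \in MG (i + j%:Z).
Proof. by case: HM => _ [_ H _ _] _ _ _; apply: H. Qed.
Lemma MG_decomp m : exists s : seq int, exists f : int -> M,
  [/\ uniq s, (forall i, f i \in MG i) & m = \sum_(i <- s) f i].
Proof. by case: HM => _ [_ _ H _] _ _ _. Qed.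
Lemma MG_sum_eq0 (s : seq int) (f : int -> M) : uniq s -> (forall i, f i \in MG i) ->
  \sum_(i <- s) f i = 0 -> forall i, i \in s -> f i = 0.
Proof. by case: HM => _ [_ _ _ H] _ _ _; apply: H. Qed.
Lemma MG_dim1 (i : int) : 0 <= i -> kdim_one act (MG i).
Proof. by case: HM => _ _ _ H _; apply: H. Qed.
Lemma M_gen0 m : exists s : seq (M * A),
  all (fun p => p.1 \in MG 0) s /\ m = \sum_(p <- s) act p.1 p.2.
Proof. by case: HM => _ _ _ _ H. Qed.

Lemma MG_ge0 (i : int) m : m \in MG i -> m != 0 -> 0 <= i.
Proof.
move=> hm; apply: contraNT; rewrite -ltNge => hi.
by case: HM => _ _ H _ _; rewrite (H i hi m hm).
Qed.

Lemma MG_nz (i : int) : 0 <= i -> exists2 e, e \in MG i & e != 0.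
Proof. by case/MG_dim1 => e he [e0 _]; exists e. Qed.

Lemma MG_span (i : int) m x : m \in MG i -> m != 0 -> x \in MG i ->
  exists mu : k, x = act m mu%:A.
Proof.
move=> hm m0 hx; case: (MG_dim1 (MG_ge0 hm m0)) => e he [e0 He].
case: (He m hm) => cm em; case: (He x hx) => cx ex.
have cm0 : cm != 0 by apply: contraNneq m0 => c0; rewrite em c0 scale0r act0r.
by exists (cm^-1 * cx); rewrite em act_scalarM mulrA mulfV // mul1r.
Qed.

Lemma act_stable_gen (Q : M -> Prop) :
    (forall x y, Q x -> Q y -> Q (x - y)) ->
    (forall x a, Q x -> a \in G 0 -> Q (act x a)) ->
    (forall x a, Q x -> a \in G 1 -> Q (act x a)) ->
  forall x a, Q x -> Q (act x a).
Proof.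
move=> QB QG0 QG1 x a.
pose S : {pred A} := fun b => `[< forall y, Q y -> Q (act y b) >].
suff /asboolP : a \in S by apply.
apply: Hgen; rewrite ?unfold_in.
- split; rewrite ?unfold_in.
  + by apply/asboolP => y; rewrite act1.
  + move=> b c /asboolP hb /asboolP hc; apply/asboolP => y hy.
    by rewrite actBr; apply: QB; [apply: hb | apply: hc].
  + move=> b c /asboolP hb /asboolP hc; apply/asboolP => y hy.
    by rewrite -actA; apply: hc; apply: hb.
- by move=> b hb; rewrite unfold_in; apply/asboolP => y hy; apply: QG0.
- by move=> b hb; rewrite unfold_in; apply/asboolP => y hy; apply: QG1.
Qed.

Definition deg_le (i : nat) (x : M) : Prop :=
  exists f : nat -> M, (forall j, f j \in MG j%:Z) /\ x = \sum_(0 <= j < i.+1) f j.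

Lemma deg_le_B i x y : deg_le i x -> deg_le i y -> deg_le i (x - y).
Proof.
move=> [f [hf ->]] [g [hg ->]]; exists (fun j => f j - g j).
by split; [move=> j; apply: MG_B | rewrite sumrB].
Qed.

Lemma deg_le_D i x y : deg_le i x -> deg_le i y -> deg_le i (x + y).
Proof.
move=> [f [hf ->]] [g [hg ->]]; exists (fun j => f j + g j); rewrite big_split.
by split => // j; rewrite -[g j]opprK; apply: MG_B => //; apply: MG_N.
Qed.

Lemma deg_le_homog i j x : (j <= i)%N -> x \in MG j%:Z -> deg_le i x.
Proof.
move=> hj hx; exists (fun l => if l == j then x else 0); split.
  by move=> l; case: eqP => [->|_] //; apply: MG_0.
by rewrite -big_mkcond /= big_nat1_eq /= ltnS hj.
Qed.

Lemma deg_le_act0 i x a : deg_le i x -> a \in G 0 -> deg_le i (act x a).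
Proof.
move=> [f [hf ->]] ha; exists (fun j => act (f j) a); rewrite act_sum; split => //.
by move=> j; have := MG_act (hf j) ha; rewrite addr0.
Qed.

Lemma deg_le_act1 i x a : {in MG i%:Z, forall y, act y a = 0} ->
  deg_le i x -> a \in G 1 -> deg_le i (act x a).
Proof.
move=> ann [f [hf ->]] ha.
exists (fun j => if j is j'.+1 then act (f j') a else 0); split.
  case=> [|j]; first exact: MG_0.
  by have := MG_act (hf j) ha; rewrite -PoszD addn1.
by rewrite act_sum big_nat_recr //= big_nat_recl //= ann ?addr0 ?add0r.
Qed.

Lemma homog_deg_le_eq0 i x : x \in MG i.+1%:Z -> deg_le i x -> x = 0.
Proof.
move=> hx [f [hf ef]].
pose g (l : int) := if l == i.+1%:Z then - x else if 0 <= l then f `|l|%N else 0.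
have hg l : g l \in MG l.
  rewrite /g; case: eqP => [->|_]; first exact: MG_N.
  case: (boolP (0 <= l)) => hl; last exact: MG_0.
  by have := hf `|l|%N; rewrite gez0_abs.
have inj_Posz : injective Posz by move=> a b [].
have Hu : uniq [seq j%:Z | j <- iota 0 i.+2] by rewrite map_inj_uniq ?iota_uniq.
suff : g i.+1%:Z = 0 by rewrite /g eqxx => /eqP; rewrite oppr_eq0 => /eqP.
apply: (MG_sum_eq0 Hu hg); last by rewrite mem_map // mem_iota ltnS leqnn.
rewrite big_map -/(index_iota 0 i.+2) big_nat_recr //= {2}/g eqxx ef.
apply/eqP; rewrite subr_eq0; apply/eqP; apply: eq_big_nat => j /andP [_ hj].
by rewrite /g eqz_nat ltn_eqF.
Qed.

Lemma act_G1_neq0 (i : nat) m : m \in MG i%:Z -> m != 0 ->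
  exists2 a, a \in G 1 & act m a != 0.
Proof.
move=> hm m0; apply: contrapT => no_a.
have ann a : a \in G 1 -> {in MG i%:Z, forall y, act y a = 0}.
  move=> ha y /(MG_span hm m0) [mu ->]; rewrite act_scalarC.
  suff -> : act m a = 0 by rewrite act0l.
  by apply/eqP/negPn/negP => hma; apply: no_a; exists a.
have le_all x : deg_le i x.
  have [s [hs ->]] := M_gen0 x; elim: s hs => [|p s IH] /=.
    by rewrite big_nil; exists (fun _ => 0); split; [move=> ?; apply: MG_0 | rewrite big1].
  case/andP => hp hs; rewrite big_cons; apply: deg_le_D; last exact: IH.
  apply: (act_stable_gen (@deg_le_B i) (@deg_le_act0 i)) => [y a hy ha|].
    exact: deg_le_act1 (ann a ha) hy ha.
  exact: deg_le_homog (leq0n i) hp.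
have [e he e0] := MG_nz (isT : 0 <= i.+1%:Z).
by move: e0; rewrite (homog_deg_le_eq0 he (le_all e)) eqxx.
Qed.

Lemma act_Gn_neq0 n (i : int) m : m \in MG i -> m != 0 ->
  exists2 a, a \in G n & act m a != 0.
Proof.
elim: n i m => [|n IH] i m hm m0; first by exists 1; [exact: G_1 | rewrite act1].
have i0 := MG_ge0 hm m0; rewrite -(gez0_abs i0) in hm.
have [a ha hma] := act_G1_neq0 hm m0.
have [b hb hb0] := IH _ _ (MG_act hm ha) hma.
by exists (a * b); [rewrite -add1n; apply: G_M | rewrite -actA].
Qed.

Lemma torsion_elt_eq0 x : torsion_elt G act x -> x = 0.
Proof.
move=> [n Hn]; have [s [f [us hf ex]]] := MG_decomp x.
rewrite ex big1_seq // => j /andP [_ js]; apply/eqP/negPn/negP => fj0.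
have [a ha ha0] := act_Gn_neq0 n (hf j) fj0.
have inj_shift : injective (+%R^~ n%:Z) by move=> u v /addIr.
have Hu : uniq [seq l + n%:Z | l <- s] by rewrite map_inj_uniq.
have hfa l : act (f (l - n%:Z)) a \in MG l.
  by have := MG_act (hf (l - n%:Z)) ha; rewrite subrK.
have fa0 : act (f j) a = 0.
  have := MG_sum_eq0 Hu hfa _ (map_f _ js); rewrite addrK; apply.
  rewrite big_map; under eq_bigr do rewrite addrK.
  by rewrite -act_sum -ex; apply: Hn; apply: in_Age_homog.
by rewrite fa0 eqxx in ha0.
Qed.

Section GradedMap.
Variables (P : {pred M}) (f : M -> M).
Hypotheses (HP : graded_submodule act MG P) (cP : cotorsion G act P).
Hypothesis fD : {in P &, {morph f : x y / x + y}}.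
Hypothesis fA : forall m a, m \in P -> f (act m a) = act (f m) a.
Hypothesis fG : forall i m, m \in P -> m \in MG i -> f m \in MG i.

Lemma graded_submodule0 : 0 \in P. Proof. by case: HP. Qed.
Lemma graded_submoduleD x y : x \in P -> y \in P -> x + y \in P.
Proof.
case: HP => P0 PB _ _ xP yP; have -> : x + y = x - (0 - y) by rewrite sub0r opprK.
by apply: (PB) => //; apply: (PB).
Qed.
Lemma graded_submodule_act x a : x \in P -> act x a \in P.
Proof. by case: HP => _ _ + _; apply. Qed.

Lemma graded_map0 : f 0 = 0.
Proof. by apply: (addrI (f 0)); rewrite -fD ?graded_submodule0 // !addr0. Qed.

(* [m a] and [u b] lie on the same line M_(i + n), so [f] scales both by the same factor. *)
Lemma graded_map_homog_scalar n u c : u \in P -> u \in MG n%:Z -> u != 0 ->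
  f u = act u c%:A -> forall i m, m \in P -> m \in MG i -> f m = act m c%:A.
Proof.
move=> uP uG u0 fu i m mP mG.
have [-> | m0] := eqVneq m 0; first by rewrite graded_map0 act0l.
have [a ha hma] := act_Gn_neq0 n mG m0.
have [b hb hub] := act_Gn_neq0 `|i|%N uG u0.
have ubG : act u b \in MG (i + n%:Z).
  by have := MG_act uG hb; rewrite gez0_abs ?(MG_ge0 mG m0) // addrC.
have [lam ma_ub] := MG_span ubG hub (MG_act mG ha).
have [mu fm] := MG_span mG m0 (fG mP mG).
have fma_mu : f (act m a) = act (act m a) mu%:A by rewrite fA // fm act_scalarC.
have fma_c : f (act m a) = act (act m a) c%:A.
  by rewrite ma_ub !fA ?graded_submodule_act // fu act_scalarC !act_scalarM mulrC.
have [<- // | muc] := eqVneq mu c.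
move: hma; rewrite (@act_scalar_eq0 (act m a) (mu - c)) ?eqxx ?subr_eq0 //.
by rewrite scalerBl actBr -fma_mu -fma_c subrr.
Qed.

Lemma graded_map_scalar : exists c, {in P, forall m, f m = act m c%:A}.
Proof.
have [e he e0] := MG_nz (lexx 0); have [n hn] := cP e.
have [a ha hu] := act_Gn_neq0 n he e0.
have uP : act e a \in P by apply: hn; apply: in_Age_homog.
have uG : act e a \in MG n%:Z by have := MG_act he ha; rewrite add0r.
have [c fu] := MG_span uG hu (fG uP uG).
have fhom := graded_map_homog_scalar uP uG hu fu.
exists c => m mP; case: HP => _ _ _ /(_ m mP) [s [g [_ hg ->]]].
suff [] : \sum_(i <- s) g i \in P /\ f (\sum_(i <- s) g i) = act (\sum_(i <- s) g i) c%:A by [].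
elim: s => [|j s [sP fs]]; first by rewrite big_nil graded_map0 act0l graded_submodule0.
have [gjG gjP] := hg j; rewrite big_cons graded_submoduleD //.
by rewrite fD // fs (fhom _ _ gjP gjG) actDl.
Qed.

End GradedMap.

Lemma qgr_rep_scalar P f : qgr_rep G act MG P f ->
  exists c : k, qgr_equiv G act MG P f (@allM M) (scal_endo act c).
Proof.
move=> [HP cP fD fA fG].
have [|m a mP|i m mP mG|c fc] := @graded_map_scalar P f HP cP.
- move=> x y xP yP; apply/eqP; rewrite -subr_eq0 opprD addrA.
  by rewrite (torsion_elt_eq0 (fD _ _ xP yP)).
- by apply/eqP; rewrite -subr_eq0; rewrite (torsion_elt_eq0 (fA _ a mP)).
- have [n nG /torsion_elt_eq0 /eqP] := fG i m mP mG.
  by rewrite subr_eq0 => /eqP ->.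
exists c, P; split => // m mP; rewrite /scal_endo fc // subrr.
by exists 0%N => a _; apply: act0l.
Qed.

Lemma scal_endo_inj c d :
  qgr_equiv G act MG (@allM M) (scal_endo act c) (@allM M) (scal_endo act d) -> c = d.
Proof.
move=> [P [_ cP _ _ Hcd]]; apply/eqP/negPn/negP => cd.
have [e he e0] := MG_nz (lexx 0); have [n hn] := cP e.
have [a ha hea] := act_Gn_neq0 n he e0.
have eaP : act e a \in P by apply: hn; apply: in_Age_homog.
move: hea; rewrite (@act_scalar_eq0 (act e a) (c - d)) ?eqxx ?subr_eq0 //.
by rewrite scalerBl actBr; apply: torsion_elt_eq0; apply: Hcd.
Qed.

End PointModule.

Theorem lemma10p1 (k : fieldType) (A : algType k) (G : nat -> {pred A})
  (HA : is_Ngraded_algebra G) (Hgen : generated_in_degree_one G)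
  (M : zmodType) (act : M -> A -> M) (MG : int -> {pred M})
  (HM : is_point_module G act MG) :
  End_QGr_iso_k G act MG.
Proof. by split; [exact: qgr_rep_scalar | exact: scal_endo_inj]. Qed.
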